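(* Let $I$ be a compact interval and let $f\colon I\to I$ be continuous. Let $2^f\colon 2^I\to 2^I$ be the induced map $2^f(C)=f(C)$ on the hyperspace $2^I$. Then the set $\mathrm{Per}(2^f)$ of fundamental periods of periodic points of $2^f$ is equal to one of $\{1\}$, $\{1,2\}$, or $\mathbb N$.
   Context: For a compact metric space $X$, $2^X$ denotes the space of nonempty closed subsets of $X$ with the Hausdorff metric, and for continuous $f\colon X\to X$ the induced map $2^f\colon 2^X\to 2^X$ is $2^f(C)=\{f(x):x\in C\}$. For a map $g$, $\mathrm{Per}(g)$ denotes the set of all $k\in\mathbb N$ such that some point has fundamental (least) period $k$ under $g$. *)

From HB Require Import structures.
From mathcomp Require Import all_boot all_order all_algebra.
From mathcomp Require Import all_classical all_reals all_analysis.
Set Implicit Arguments. Unset Strict Implicit. Unset Printing Implicit Defensive.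
Import Order.TTheory GRing.Theory Num.Theory numFieldTopology.Exports numFieldNormedType.Exports.
Local Open Scope classical_set_scope.
Local Open Scope ring_scope.

Definition hyperspace (R : realType) (a b : R) (C : set R) : Prop :=
  C `<=` `[a, b] /\ C !=set0 /\ closed C.

Definition induced_map (R : realType) (f : R -> R) : set R -> set R :=
  fun C => f @` C.

Definition fund_period (T : Type) (g : T -> T) (x : T) (k : nat) : Prop :=
  (0 < k)%N /\ iter k g x = x /\ (forall j : nat, (0 < j)%N -> (j < k)%N -> iter j g x <> x).

Definition Per_hyper (R : realType) (a b : R) (f : R -> R) : set nat :=
  [set k | exists C : set R, hyperspace a b C /\ fund_period (induced_map f) C k].

(* Extend f to a continuous map F of the line with values in [a, b]; this changes
   no orbit starting in [a, b], and a fixed point of F gives the period 1.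

   If some Fix(F^n) is not an interval, one finds a non-periodic point y whose
   forward orbit and one of its backward orbits under F^n converge.  Then y is
   isolated in its two-sided F-orbit, and for every k the closure of the points
   of this orbit at times divisible by k is a closed set of exact period k.

   Otherwise every Fix(F^n) is an interval.  On the interval Fix(F^2k) the map F
   is injective, hence monotone, so F^2 is increasing there and
   Fix(F^2k) = Fix(F^2).  If F^k(C) = C for a closed set C, then H = F^2k also
   satisfies H(C) = C, and comparing H with the identity on both sides of
   Fix(H) puts the extreme points of C, hence all of C, in Fix(F^2).  So 2^F
   only has the periods 1 and 2. *)

From HB Require Import structures.
From mathcomp Require Import all_boot all_order all_algebra.
From mathcomp Require Import all_classical all_reals all_analysis.
From mathcomp Require Import zify lra.
Set Implicit Arguments. Unset Strict Implicit. Unset Printing Implicit Defensive.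
Import Order.TTheory GRing.Theory Num.Theory numFieldTopology.Exports numFieldNormedType.Exports.
Local Open Scope classical_set_scope.
Local Open Scope ring_scope.

Definition aperiodic (T : Type) (F : T -> T) (x : T) :=
  forall m, (0 < m)%N -> iter m F x <> x.

Section real_maps.
Variable R : realType.
Implicit Types (F G h : R -> R) (P : set R).

Definition fixset h : set R := [set x | h x = x].

Lemma fixsetE h x : fixset h x = (h x = x). Proof. by []. Qed.

Lemma fixset_iterS F n x : fixset (iter n F) x -> fixset (iter n F) (F x).
Proof. by rewrite !fixsetE -iterSr iterS => ->. Qed.

Lemma iter_induced_map F (C : set R) j :
  iter j (induced_map F) C = iter j F @` C.
Proof.
elim: j => [|j IH]; first by rewrite image_id.
by rewrite iterS IH /induced_map image_comp.
Qed.

Lemma continuous_iter F n : continuous F -> continuous (iter n F).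
Proof.
move=> Fc; elim: n => [|n IH] x /=; first exact: cvg_id.
exact: continuous_comp (IH x) (Fc _).
Qed.

Lemma closed_fixset h : continuous h -> closed (fixset h).
Proof.
move=> hc; have -> : fixset h = (fun x => h x - x) @^-1` [set 0].
  apply/seteqP; split => x /=; first by move=> ->; rewrite subrr.
  by move/eqP; rewrite subr_eq0 => /eqP.
apply: (continuous_closedP _).1 (@closed_eq _ _) => x.
exact: continuousB (hc x) (@cvg_id _ _).
Qed.

Lemma iter_bounded F n a b x :
  (forall x, a <= F x <= b) -> (0 < n)%N -> a <= iter n F x <= b.
Proof. by move=> F_ab; case: n => // n _; exact: F_ab. Qed.

Lemma ivt_le G s t v :
  continuous G -> s <= t -> G s <= v <= G t -> exists2 c, s <= c <= t & G c = v.
Proof.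
move=> Gc st /andP[Gsv vGt].
have [|c] := @IVT R G s t v st (continuous_subspaceT Gc); last by rewrite in_itv; exists c.
by rewrite ge_min Gsv le_max vGt orbT.
Qed.

Lemma ivt_ge G s t v :
  continuous G -> s <= t -> G t <= v <= G s -> exists2 c, s <= c <= t & G c = v.
Proof.
move=> Gc st /andP[Gtv vGs].
have [|c] := @IVT R G s t v st (continuous_subspaceT Gc); last by rewrite in_itv; exists c.
by rewrite ge_min Gtv orbT le_max vGs.
Qed.

Lemma fixed_point_between G s t :
  continuous G -> s <= t -> s <= G s -> G t <= t -> exists2 c, s <= c <= t & G c = c.
Proof.
move=> Gc st sGs Gtt.
have dc : continuous (fun x => G x - x).
  by move=> x; exact: continuousB (Gc x) (@cvg_id _ _).
have [|c cst /eqP] := @ivt_ge _ s t 0 dc st; first by rewrite subr_le0 Gtt subr_ge0.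
by rewrite subr_eq0 => /eqP; exists c.
Qed.

Lemma exists_fixed_point F a b :
  continuous F -> (forall x, a <= F x <= b) -> exists2 p, a <= p <= b & F p = p.
Proof.
move=> Fc F_ab; have [aFa Fbb] : a <= F a /\ F b <= b.
  by case/andP: (F_ab a); case/andP: (F_ab b).
exact: fixed_point_between Fc (le_trans aFa (proj2 (andP (F_ab a)))) aFa Fbb.
Qed.

Lemma closed_inf_mem P : closed P -> P !=set0 -> has_lbound P -> P (inf P).
Proof.
move=> Pcl P0 lbP; apply: itv_closed_infimums => //; split; first exact: ge_inf.
by move=> x; exact: lb_le_inf.
Qed.

Lemma closed_sup_mem P : closed P -> P !=set0 -> has_ubound P -> P (sup P).
Proof.
move=> Pcl P0 ubP; apply: itv_closed_supremums => //; split; first exact: ub_le_sup.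
by move=> x; exact: ge_sup.
Qed.

Lemma increasing_periodic_fixed P g x k :
  (forall s t, P s -> P t -> s < t -> g s < g t) -> (forall s, P s -> P (g s)) ->
  P x -> (0 < k)%N -> iter k g x = x -> g x = x.
Proof.
move=> g_incr g_stable Px; case: k => // k _ per.
have Pit j : P (iter j g x) by elim: j => //= j; exact: g_stable.
have [lt|gt|//] := ltgtP x (g x).
- have up j : iter j g x < iter j.+1 g x.
    by elim: j => // j; exact: g_incr (Pit _) (Pit _).
  have : x < iter k.+1 g x by elim: k {per} => // k IH; exact: lt_trans IH (up _).
  by rewrite per ltxx.
- have down j : iter j.+1 g x < iter j g x.
    by elim: j => // j; exact: g_incr (Pit _) (Pit _).
  have : iter k.+1 g x < x by elim: k {per} => // k IH; exact: lt_trans (down _) IH.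
  by rewrite per ltxx.
Qed.

Lemma iter2_increasing_on_fixset F N :
  continuous F -> (0 < N)%N -> is_interval (fixset (iter N F)) ->
  forall s t, fixset (iter N F) s -> fixset (iter N F) t -> s < t -> F (F s) < F (F t).
Proof.
move=> Fc; case: N => // N _; set P := fixset _ => iP.
have hullP x : P x <-> x \in Rhull P by rewrite {1}(is_intervalP P).1.
have Finj : {in Rhull P &, injective F}.
  move=> x y /hullP; rewrite /P fixsetE => Px /hullP; rewrite /P fixsetE => Py Fxy.
  by rewrite -Px -Py !iterSr Fxy.
have Pin x : P x -> x \in Rhull P by move/hullP.
move=> s t Ps Pt st; have FPs := fixset_iterS Ps; have FPt := fixset_iterS Pt.
case: (itv_continuous_inj_mono (continuous_subspaceT Fc) Finj) => mono.
- exact/(mono _ _ (Pin _ FPs) (Pin _ FPt))/(mono _ _ (Pin _ Ps) (Pin _ Pt)).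
- exact/(mono _ _ (Pin _ FPs) (Pin _ FPt))/(mono _ _ (Pin _ Pt) (Pin _ Ps)).
Qed.

Lemma fixset_iter2 F k :
  continuous F -> (0 < k)%N -> is_interval (fixset (iter (k * 2) F)) ->
  fixset (iter (k * 2) F) `<=` fixset (iter 2 F).
Proof.
move=> Fc k0 iP x Px.
have k20 : (0 < k * 2)%N by rewrite muln_gt0 k0.
apply: (increasing_periodic_fixed (P := fixset (iter (k * 2) F)) _ _ Px k0).
- exact: iter2_increasing_on_fixset.
- by move=> s /fixset_iterS /fixset_iterS.
- by rewrite -iterM.
Qed.

End real_maps.

Section invariant_closed_set.
Variables (R : realType) (a b p : R) (H : R -> R) (C : set R).
Hypotheses (Hc : continuous H) (H_ab : forall x, a <= H x <= b) (Hp : H p = p).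
Hypotheses (fixH_itv : is_interval (fixset H)) (fixHH : fixset (H \o H) `<=` fixset H).
Hypotheses (C_cl : closed C) (C0 : C !=set0) (C_ab : C `<=` `[a, b]) (HC : H @` C = C).

Let P := fixset H.

Let moves_toward_p G x : continuous G -> (forall x, a <= G x <= b) -> fixset G `<=` P ->
  ~ P x -> a <= x <= b -> (x < p /\ x < G x) \/ (p < x /\ G x < x).
Proof.
move=> Gc G_ab GP Px /andP[ax xb].
have [xp|px|xp] := ltgtP x p; last by rewrite xp in Px.
- left; split => //; rewrite ltNge; apply/negP => Gxx.
  have aGa : a <= G a by case/andP: (G_ab a).
  have [c /andP[_ cx] /GP Pc] := fixed_point_between Gc ax aGa Gxx.
  by apply: Px; apply: (fixH_itv Pc Hp); rewrite cx ltW.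
- right; split => //; rewrite ltNge; apply/negP => xGx.
  have Gbb : G b <= b by case/andP: (G_ab b).
  have [c /andP[xc _] /GP Pc] := fixed_point_between Gc xb xGx Gbb.
  by apply: Px; apply: (fixH_itv Hp Pc); rewrite xc ltW.
Qed.

Let H_moves_toward_p x := @moves_toward_p H x Hc H_ab (@subset_refl _ _).

Let HH_moves_toward_p x : ~ P x -> a <= x <= b ->
  (x < p /\ x < H (H x)) \/ (p < x /\ H (H x) < x).
Proof.
have HHc : continuous (H \o H) by move=> y; exact: continuous_comp (@Hc y) (@Hc _).
by apply: (@moves_toward_p (H \o H) x HHc) => // y; exact: H_ab.
Qed.

Let C_bounds c : C c -> a <= c <= b.
Proof. by move/C_ab; rewrite /= in_itv. Qed.

Let inf_le c : C c -> inf C <= c.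
Proof. by apply: ge_inf; exists a => x /C_bounds/andP[]. Qed.

Let le_sup c : C c -> c <= sup C.
Proof. by apply: ub_le_sup; exists b => x /C_bounds/andP[]. Qed.

Let C_inf : C (inf C).
Proof. by apply: closed_inf_mem => //; exists a => x /C_bounds/andP[]. Qed.

Let C_sup : C (sup C).
Proof. by apply: closed_sup_mem => //; exists b => x /C_bounds/andP[]. Qed.

Let H_onto c : C c -> exists2 c', C c' & H c' = c.
Proof. by rewrite -{1}HC => -[c' Cc' <-]; exists c'. Qed.

Let out_preimage c c' : H c' = c -> ~ P c -> ~ P c'.
Proof. by move=> <- Pc Pc'; apply: Pc; rewrite /P fixsetE Pc'. Qed.

Let inf_out_preimage : ~ P (inf C) ->
  exists2 c, C c & [/\ H c = inf C, p < c & ~ P c].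
Proof.
move=> Pinf; have [c Cc Hc_inf] := H_onto C_inf.
have Pc := out_preimage Hc_inf Pinf.
exists c => //; split => //; case: (H_moves_toward_p Pc (C_bounds Cc)) => [[_]|[//]].
by rewrite Hc_inf ltNge inf_le.
Qed.

Let sup_out_preimage : ~ P (sup C) ->
  exists2 c, C c & [/\ H c = sup C, c < p & ~ P c].
Proof.
move=> Psup; have [c Cc Hc_sup] := H_onto C_sup.
have Pc := out_preimage Hc_sup Psup.
exists c => //; split => //; case: (H_moves_toward_p Pc (C_bounds Cc)) => [[//]|[_]].
by rewrite Hc_sup ltNge le_sup.
Qed.

Let inf_out_sup_out : ~ P (inf C) -> ~ P (sup C).
Proof.
move=> /inf_out_preimage[c Cc [_ pc Pc]] Psup; apply: Pc.
by apply: (fixH_itv Hp Psup); rewrite le_sup // ltW.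
Qed.

Let sup_out_inf_out : ~ P (sup C) -> ~ P (inf C).
Proof.
move=> /sup_out_preimage[c Cc [_ cp Pc]] Pinf; apply: Pc.
by apply: (fixH_itv Pinf Hp); rewrite inf_le // ltW.
Qed.

(* With H c = inf C, p < c and H c2 = sup C, c2 < p, the IVT gives x in [p, c]
   with H x = c2; this x > p lies outside P although H (H x) = sup C >= x. *)
Let not_inf_sup_out : ~ P (inf C) -> ~ P (sup C) -> False.
Proof.
move=> /inf_out_preimage[c Cc [Hc_inf pc _]] /sup_out_preimage[c2 Cc2 [Hc2 c2p _]].
have : H c <= c2 <= H p by rewrite Hc_inf Hp inf_le // ltW.
case/(ivt_ge Hc (ltW pc)) => x /andP[px xc] Hx.
have Px : ~ P x.
  by rewrite /P fixsetE Hx => c2x; move: (lt_le_trans c2p px); rewrite c2x ltxx.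
have x_ab : a <= x <= b.
  case/andP: (H_ab p) (C_bounds Cc) => + _ /andP[_ cb]; rewrite Hp => ap.
  by rewrite (le_trans ap px) (le_trans xc cb).
case: (HH_moves_toward_p Px x_ab) => [[xp _]|[_]]; first by move: px; rewrite leNgt xp.
by rewrite Hx Hc2 ltNge (le_trans xc) ?le_sup.
Qed.

Lemma invariant_closed_sub_fixset : C `<=` fixset H.
Proof.
have Pinf : P (inf C).
  by apply: contrapT => Pinf; apply: not_inf_sup_out Pinf (inf_out_sup_out Pinf).
have Psup : P (sup C).
  by apply: contrapT => Psup; apply: not_inf_sup_out (sup_out_inf_out Psup) Psup.
by move=> c Cc; apply: (fixH_itv Pinf Psup); rewrite inf_le ?le_sup.
Qed.

End invariant_closed_set.

Lemma invariant_closed_iter2 (R : realType) (a b : R) (F : R -> R) (C : set R) k :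
  continuous F -> (forall x, a <= F x <= b) ->
  (forall n, is_interval (fixset (iter n F))) ->
  closed C -> C !=set0 -> C `<=` `[a, b] -> (0 < k)%N -> iter k F @` C = C ->
  iter 2 F @` C = C.
Proof.
move=> Fc F_ab fix_itv Ccl C0 Cab k0 FkC.
have k20 : (0 < k * 2)%N by rewrite muln_gt0 k0.
have [p _ Fp] := exists_fixed_point Fc F_ab.
have HHfix : fixset (iter (k * 2) F \o iter (k * 2) F) `<=` fixset (iter (k * 2) F).
  move=> x; rewrite fixsetE /= -iterD addnn -muln2 => /(fixset_iter2 Fc k20 (fix_itv _)).
  by rewrite !fixsetE iterM => F2x; rewrite iter_fix.
have HC : iter (k * 2) F @` C = C.
  by rewrite muln2 -addnn (eq_imagel (fun x _ => iterD k k F x)) -image_comp !FkC.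
have C2 : C `<=` fixset (iter 2 F).
  apply: subset_trans (fixset_iter2 Fc k0 (fix_itv _)).
  exact: invariant_closed_sub_fixset (continuous_iter Fc)
    (fun x => iter_bounded x F_ab k20) (iter_fix _ Fp) (fix_itv _) HHfix Ccl C0 Cab HC.
by rewrite (eq_imagel C2) image_id.
Qed.

Section biasymptotic_points.
Variable R : realType.
Implicit Types (F h : R -> R).

Definition biasymptotic F y := aperiodic F y /\ exists n (xb : nat -> R),
  [/\ (0 < n)%N, xb 0%N = y, forall m, iter n F (xb m.+1) = xb m, cvgn xb &
      cvgn (fun m => iter m (iter n F) y)].

Lemma backward_orbit_cvg h u y : continuous h -> h u = u -> u < y < h y ->
  exists xb : nat -> R, [/\ xb 0%N = y, forall m, h (xb m.+1) = xb m & cvgn xb].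
Proof.
move=> hc hu /andP[uy yhy].
have pre x : exists c, u < x < h x -> u < c < x /\ h c = x.
  have [/andP[ux xhx]|] := pselect (u < x < h x); last by exists x.
  have : h u <= x <= h x by rewrite hu !ltW.
  case/(ivt_le hc (ltW ux)) => c /andP[uc cx] hcx; exists c => _.
  rewrite !lt_neqAle uc cx !andbT; split => //; apply/andP; split; apply/eqP => ec.
  - by move: hcx; rewrite -ec hu => xu; rewrite xu ltxx in ux.
  - by rewrite -[in h x]ec hcx ltxx in xhx.
have [g gP] := choice pre.
have inv m : u < iter m g y < h (iter m g y).
  elim: m => [|m IH]; first by rewrite uy.
  by have [/andP[-> ?] ->] := gP _ IH.
exists (fun m => iter m g y); split => // [m|]; first exact: (gP _ (inv m)).2.
apply: nonincreasing_is_cvgn.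
  by apply/nonincreasing_seqP => m; have [/andP[_ /ltW]] := gP _ (inv m).
by exists u => _ [m _ <-]; have /andP[/ltW] := inv m.
Qed.

Lemma orbit_cvg_increasing h y w : y < w -> (forall x, y <= x < w -> x < h x < w) ->
  cvgn (fun m => iter m h y) /\ aperiodic h y.
Proof.
move=> yw hI.
have inv m : y <= iter m h y < w.
  elim: m => [|m /[dup] /hI /andP[hm hmw] /andP[ym _]]; first by rewrite lexx.
  by rewrite /= hmw (le_trans ym (ltW hm)).
have incr m : iter m h y < iter m.+1 h y by have /andP[] := hI _ (inv m).
split.
- apply: nondecreasing_is_cvgn; first by apply/nondecreasing_seqP => m; exact/ltW.
  by exists w => _ [m _ <-]; have /andP[_ /ltW] := inv m.
- case=> // m _ E; have /andP[ym _] := inv m.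
  by have := le_lt_trans ym (incr m); rewrite E ltxx.
Qed.

Lemma orbit_cvg_fixed h y w : h y = w -> h w = w -> y != w ->
  cvgn (fun m => iter m h y) /\ aperiodic h y.
Proof.
move=> hy hw yw; have orbit m : iter m.+1 h y = w by elim: m => //= m ->.
split; last by case=> // m _; rewrite orbit => /eqP; rewrite eq_sym (negPf yw).
apply: (cvgP w); rewrite -cvg_shiftS.
by rewrite (eq_fun orbit); exact: cvg_cst.
Qed.

Lemma biasymptotic_of_orbit F n u y : continuous F -> (0 < n)%N ->
  iter n F u = u -> u < y < iter n F y -> cvgn (fun m => iter m (iter n F) y) ->
  aperiodic (iter n F) y -> biasymptotic F y.
Proof.
move=> Fc n0 hu uyh fwd aper.
have [xb [xb0 xbS xbc]] := backward_orbit_cvg (continuous_iter Fc) hu uyh.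
split; last by exists n, xb.
by move=> m m0 Fm; apply: (aper m m0); rewrite -iterM mulnC iterM iter_fix.
Qed.

Lemma biasymptotic_of_escape F b n u y0 : continuous F -> (forall x, F x <= b) ->
  (0 < n)%N -> iter n F u = u -> u < y0 < iter n F y0 -> exists y, biasymptotic F y.
Proof.
move=> Fc Fb n0 hu /andP[uy0 y0h]; set h := iter n F in hu y0h *.
have hc : continuous h := continuous_iter Fc.
have hb x : h x <= b by rewrite /h -(prednK n0); exact: Fb.
pose W := [set x | y0 <= x] `&` fixset h.
have [w0 /andP[y0w0 _] hw0] :=
  fixed_point_between hc (le_trans (ltW y0h) (hb _)) (ltW y0h) (hb b).
have lbW : has_lbound W by exists y0 => x [].
have [y0w hw] : W (inf W).
  apply: closed_inf_mem => //; last by exists w0; split.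
  by apply: closedI; [exact: closed_ge | exact: closed_fixset].
set w := inf W in y0w hw.
have y0w' : y0 < w.
  by rewrite lt_neqAle y0w andbT; apply: contraTneq y0h => ->; rewrite hw ltxx.
(* Either h maps some x in [y0, w)
   beyond w, and then a preimage of w in (u, x] has an eventually fixed orbit, or
   the orbit of y0 increases to a limit in (y0, w]. *)
case: (pselect (exists2 x, y0 <= x < w & w <= h x)) => [[x /andP[y0x xw] wx]|jump].
  have : h u <= w <= h x by rewrite hu wx (le_trans (ltW uy0) y0w).
  case/(ivt_le hc (le_trans (ltW uy0) y0x)) => y /andP[uy yx] hy.
  have yw : y < w := le_lt_trans yx xw.
  have uy' : u < y.
    rewrite lt_neqAle uy andbT; apply: contraTneq y0w' => uy'.
    by move: hy; rewrite -uy' hu => <-; rewrite -leNgt ltW.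
  have [fwd aper] := orbit_cvg_fixed hy hw (negbT (lt_eqF yw)).
  by exists y; apply: biasymptotic_of_orbit Fc n0 hu _ fwd aper; rewrite -/h hy uy' yw.
have hI x : y0 <= x < w -> x < h x < w.
  move=> /andP[y0x xw]; apply/andP; split; last first.
    by rewrite ltNge; apply: contra_notN jump => wx; exists x; rewrite ?y0x.
  rewrite ltNge; apply/negP => hxx.
  have [c /andP[y0c cx] hcc] := fixed_point_between hc y0x (ltW y0h) hxx.
  by have := ge_inf lbW (conj y0c hcc); rewrite -/w leNgt (le_lt_trans cx xw).
have [fwd aper] := orbit_cvg_increasing y0w' hI.
by exists y0; apply: biasymptotic_of_orbit Fc n0 hu _ fwd aper; rewrite uy0.
Qed.

Lemma iter_reflect F m x : iter m (fun z => - F (- z)) x = - iter m F (- x).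
Proof. by elim: m => [|m IH]; rewrite ?opprK //= IH opprK. Qed.

Lemma biasymptotic_reflect F y :
  biasymptotic (fun z => - F (- z)) y -> biasymptotic F (- y).
Proof.
move=> [aper [n [xb [n0 xb0 xbS xbc fwd]]]]; split.
  by move=> m m0 E; apply: (aper m m0); rewrite iter_reflect E opprK.
exists n, (fun m => - xb m); split => //; first by rewrite xb0.
- by move=> m; rewrite -(xbS m) iter_reflect opprK.
- exact: is_cvgN.
have -> : (fun m => iter m (iter n F) (- y)) =
          (fun m => - iter m (iter n (fun z => - F (- z))) y).
  by apply: funext => m; rewrite -!iterM iter_reflect opprK.
exact: is_cvgN.
Qed.

Lemma is_interval_fixset_iter F a b : continuous F -> (forall x, a <= F x <= b) ->
  ~ (exists y, biasymptotic F y) -> forall n, is_interval (fixset (iter n F)).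
Proof.
move=> Fc F_ab nobi [|n]; first by move=> u v _ _ x _.
apply/is_intervalPlt => u v hu hv x /andP[ux xv]; rewrite fixsetE.
have [hx|xh|//] := ltgtP (iter n.+1 F x) x; case: nobi.
- pose G z := - F (- z).
  have Gc : continuous G.
    by move=> z; apply: continuousN; exact: continuous_comp (@opp_continuous _ z) (Fc _).
  have Gb z : G z <= - a by rewrite lerNl opprK; case/andP: (F_ab (- z)).
  have Gv : iter n.+1 G (- v) = - v by rewrite iter_reflect opprK hv.
  have Gx : - v < - x < iter n.+1 G (- x) by rewrite iter_reflect opprK !ltrN2 xv.
  have [y /biasymptotic_reflect] := biasymptotic_of_escape Gc Gb (ltn0Sn n) Gv Gx.
  by exists (- y).
- have Fb z : F z <= b by case/andP: (F_ab z).
  by apply: (biasymptotic_of_escape (y0 := x) Fc Fb (ltn0Sn n) hu); rewrite ux xh.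
Qed.

End biasymptotic_points.

Lemma image_closure_sub (T U : topologicalType) (g : T -> U) (A : set T) :
  continuous g -> g @` closure A `<=` closure (g @` A).
Proof.
move=> gc _ [x clx <-] B /gc nB; have [z [Az Bz]] := clx _ nB.
by exists (g z); split => //; exists z.
Qed.

Lemma compact_image_closure (T U : topologicalType) (g : T -> U) (A : set T) :
  hausdorff_space U -> continuous g -> compact (closure A) ->
  g @` closure A = closure (g @` A).
Proof.
move=> hU gc cA; apply/seteqP; split; first exact: image_closure_sub.
have gAcl : closed (g @` closure A).
  exact/(compact_closed hU)/(continuous_compact (continuous_subspaceT gc) cA).
rewrite [X in _ `<=` X](closure_id _).1 //.
exact/closureS/image_subset/subset_closure.
Qed.

Lemma cvg_seq_nadherent (R : realType) (u : nat -> R) (l y : R) :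
  u @ \oo --> l -> l != y -> (forall m, u m != y) ->
  \forall z \near y, forall m, z != u m.
Proof.
move=> ul ly uy; set e := `|l - y| / 2.
have e0 : 0 < e by rewrite divr_gt0 // normr_gt0 subr_eq0.
have [M _ Mu] := (cvgrPdist_lt _ _).1 ul _ e0.
have u_head : \forall z \near y, forall i : 'I_M, z != u i.
  apply: (filter_forall (nbhs_filter y)) => i.
  by apply: open_nbhs_nbhs; split; [exact: open_neq | rewrite /= eq_sym uy].
near=> z => m; have [mM|Mm] := ltnP m M.
  suff /(_ (Ordinal mM)) : forall i : 'I_M, z != u i by [].
  by near: z.
have yz : `|y - z| < e by near: z; exact: nbhsx_ballx.
apply/eqP => zu; have := Mu m Mm; rewrite -zu => lz.
have := ler_distD z l y; rewrite [`|z - y|]distrC.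
by move: yz lz; rewrite /e; lra.
Unshelve. all: by end_near.
Qed.

Lemma cvg_fixed (R : realType) (h : R -> R) (v w : nat -> R) (l : R) :
  continuous h -> v @ \oo --> l -> w @ \oo --> l -> (forall m, h (v m) = w m) ->
  h l = l.
Proof.
move=> hc vl wl hvw.
have hvl : (h \o v) @ \oo --> h l := continuous_cvg eventually_filter (hc l) vl.
by rewrite (_ : h \o v = w) in hvl; [exact: cvg_unique _ hvl wl | exact: funext].
Qed.

Section two_sided_orbit.
Variables (R : realType) (a b : R) (F : R -> R) (n k : nat) (y : R) (xb : nat -> R).
Hypotheses (Fc : continuous F) (F_ab : forall x, a <= F x <= b).
Hypotheses (n_gt0 : (0 < n)%N) (y_aper : aperiodic F y).
Hypotheses (xb0 : xb 0%N = y) (xbS : forall m, iter n F (xb m.+1) = xb m).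
Hypotheses (xb_cvg : cvgn xb) (fwd_cvg : cvgn (fun m => iter m (iter n F) y)).

Let iter_xb q m : iter (q * n) F (xb (q + m)) = xb m.
Proof. by elim: q => // q IH; rewrite mulSnr iterD addSn xbS. Qed.

Let periodic_neq z r : iter n F z = z -> iter r F z != y.
Proof.
move=> hz; apply/eqP => E; apply: (@y_aper n n_gt0).
by rewrite -{1}E -iterD addnC iterD hz.
Qed.

Let l := lim (xb @ \oo).
Let l' := lim ((fun m => iter m (iter n F) y) @ \oo).

Let hl : iter n F l = l.
Proof.
apply: (cvg_fixed (v := fun m => xb m.+1) (w := xb) (continuous_iter Fc)) => //.
by rewrite cvg_shiftS.
Qed.

Let hl' : iter n F l' = l'.
Proof.
apply: (cvg_fixed (v := fun m => iter m (iter n F) y) (continuous_iter Fc) fwd_cvg) => //.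
by rewrite (cvg_shiftS (fun m => iter m (iter n F) y)).
Qed.

Let back_nadherent (r : 'I_n) : \forall z \near y, forall m, z != iter r F (xb m.+1).
Proof.
apply: cvg_seq_nadherent (periodic_neq r hl) _.
  apply: (continuous_cvg (f := fun m => xb m.+1) eventually_filter
           (@continuous_iter _ _ r Fc l)).
  by rewrite cvg_shiftS.
move=> m; apply/eqP => E.
have rn : (r < m.+1 * n)%N by rewrite mulSn (leq_trans (ltn_ord r)) ?leq_addr.
have pos : (0 < m.+1 * n - r)%N by rewrite subn_gt0.
apply: (@y_aper _ pos).
rewrite -{1}E -iterD subnK ?(ltnW rn) //.
by rewrite -[in xb m.+1](addn0 m.+1) iter_xb.
Qed.

Let fwd_nadherent (r : 'I_n) :
  \forall z \near y, forall m, z != iter r.+1 F (iter m (iter n F) y).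
Proof.
apply: cvg_seq_nadherent (periodic_neq r.+1 hl') _.
  exact: (continuous_cvg (f := fun m => iter m (iter n F) y) eventually_filter
           (@continuous_iter _ _ r.+1 Fc l') fwd_cvg).
by move=> m; apply/eqP; rewrite -iterM -iterD; exact: y_aper.
Qed.

Let y_isolated : \forall z \near y, forall (r : 'I_n) m,
  z != iter r F (xb m.+1) /\ z != iter r.+1 F (iter m (iter n F) y).
Proof.
apply: (filter_forall (nbhs_filter y)) => r.
by apply: filterS2 (back_nadherent r) (fwd_nadherent r) => z zb zf m; split.
Qed.

(* An F-backward orbit of y: F^N (bw N) = F^(nN) (xb N) = y. *)
Let bw N := iter ((n - 1) * N) F (xb N).

Let bw0 : bw 0 = y.
Proof. by rewrite /bw muln0. Qed.

Let bwS N : F (bw N.+1) = bw N.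
Proof.
rewrite /bw -iterS (_ : ((n - 1) * N.+1).+1 = (n - 1) * N + n)%N; last by nia.
by rewrite iterD xbS.
Qed.

Let iter_bw_le j N : (j <= N)%N -> iter j F (bw N) = bw (N - j).
Proof.
elim: j N => [|j IH] N jN; first by rewrite subn0.
by rewrite iterS IH ?(ltnW jN) // -subnSK // bwS.
Qed.

Let iter_bw_ge j N : (N <= j)%N -> iter j F (bw N) = iter (j - N) F y.
Proof. by move=> Nj; rewrite -{1}(subnK Nj) iterD iter_bw_le // subnn bw0. Qed.

Let fwd_decomp N :
  exists (r : 'I_n) m, iter N.+1 F y = iter r.+1 F (iter m (iter n F) y).
Proof.
exists (Ordinal (ltn_pmod N n_gt0)), (N %/ n)%N.
by rewrite -iterM -iterD addSn addnC -divn_eq.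
Qed.

Let bw_decomp N : exists (r : 'I_n) m, bw N.+1 = iter r F (xb m.+1).
Proof.
set t := ((n - 1) * N.+1)%N.
have qN : (t %/ n <= N)%N by rewrite -ltnS ltn_divLR // /t; nia.
exists (Ordinal (ltn_pmod t n_gt0)), (N - t %/ n)%N.
rewrite /bw -/t {1}(divn_eq t n) addnC iterD /=.
by rewrite (_ : N.+1 = t %/ n + (N - t %/ n).+1)%N ?iter_xb // addnS subnKC.
Qed.

Let orbit_y := [set w | exists N, w = iter N.+1 F y \/ w = bw N.+1].

Let orbit_y_nadherent : \forall z \near y, ~ orbit_y z.
Proof.
apply: filterS y_isolated => z zI [N [zE|zE]].
  by have [r [m E]] := fwd_decomp N; move: (zI r m).2; rewrite zE E eqxx.
by have [r [m E]] := bw_decomp N; move: (zI r m).1; rewrite zE E eqxx.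
Qed.

Let S := [set w | exists t, w = iter (t * k) F y \/ w = bw (t * k)].

Let iterk_S : iter k F @` S = S.
Proof.
apply/seteqP; split => w.
  move=> [_ [t [->|->]] <-]; first by exists t.+1; left; rewrite mulSn iterD.
  case: t => [|t]; first by exists 1%N; left; rewrite mul0n bw0 mul1n.
  by exists t; right; rewrite iter_bw_le ?mulSn ?leq_addr // addKn.
move=> [[|t] [->|->]].
- exists (bw k); first by exists 1%N; right; rewrite mul1n.
  by rewrite mul0n iter_bw_ge // subnn.
- exists (bw k); first by exists 1%N; right; rewrite mul1n.
  by rewrite mul0n iter_bw_le // subnn.
- by exists (iter (t * k) F y); [exists t; left | rewrite mulSn iterD].
- exists (bw (t.+2 * k)); first by exists t.+2; right.
  by rewrite iter_bw_le mulSn ?leq_addr // addKn.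
Qed.

Let iterj_S j : (0 < j)%N -> (j < k)%N -> iter j F @` S `<=` orbit_y.
Proof.
move=> j0 jk _ [_ [t [->|->]] <-].
  by exists (j.-1 + t * k)%N; left; rewrite -iterD -addSn prednK.
have [jt|tj] := leqP j (t * k).
  have jt' : (j < t * k)%N.
    by case: t jt => [|t] jt; [rewrite mul0n leqNgt j0 in jt | rewrite mulSn ltn_addr].
  by exists (t * k - j).-1; right; rewrite iter_bw_le // prednK // subn_gt0.
by exists (j - t * k).-1; left; rewrite iter_bw_ge ?(ltnW tj) // prednK // subn_gt0.
Qed.

Let S_ab : S `<=` `[a, b].
Proof.
move=> _ [t [->|->]]; rewrite /= in_itv /=; last by rewrite -bwS; exact: F_ab.
by rewrite -bw0 -bwS -iterSr; exact: F_ab.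
Qed.

Lemma two_sided_orbit_period : exists C, [/\ hyperspace a b C,
  iter k F @` C = C & forall j, (0 < j)%N -> (j < k)%N -> iter j F @` C <> C].
Proof.
have clS_ab : closure S `<=` `[a, b].
  by rewrite [X in _ `<=` X](closure_id _).1; [exact: closureS | exact: itv_closed].
exists (closure S); split.
- split => //; split; last exact: closed_closure.
  by exists y; apply: subset_closure; exists 0%N; left.
- have cS : compact (closure S).
    exact: subclosed_compact (@closed_closure _ S) (@segment_compact _ a b) clS_ab.
  by rewrite (compact_image_closure (@Rhausdorff R) (continuous_iter Fc) cS) iterk_S.
- move=> j j0 jk E.
  have : closure S y by apply: subset_closure; exists 0%N; left.
  rewrite -E => /(image_closure_sub (continuous_iter Fc)) /(closureS (iterj_S j0 jk)).
  by move=> /(_ _ orbit_y_nadherent) [z []].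
Qed.

End two_sided_orbit.

Section hyperspace_periods.
Variable R : realType.
Implicit Types (a b : R) (f F : R -> R).

Definition clamp a b x := Num.min (Num.max x a) b.

Lemma clamp_itv a b x : a <= b -> a <= clamp a b x <= b.
Proof.
move=> ab; rewrite /clamp ge_min le_min !le_max lexx orbT ab /=.
by case: (leP x a) => _; rewrite ?lexx ?orbT.
Qed.

Lemma clamp_id a b x : a <= x <= b -> clamp a b x = x.
Proof. by case/andP=> ax xb; rewrite /clamp (max_idPl ax) (min_idPl xb). Qed.

Lemma continuous_clamp a b : continuous (clamp a b).
Proof.
move=> x; apply: (@continuous_min _ _ (fun x => Num.max x a) (fun=> b)).
  by apply: (@continuous_max _ _ id (fun=> a)); [exact: cvg_id | exact: cvg_cst].
exact: cvg_cst.
Qed.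

Lemma continuous_clamp_comp a b f :
  a <= b -> {within `[a, b], continuous f} -> continuous (f \o clamp a b).
Proof.
move=> ab fc x; set z := clamp a b x.
have z_ab : `[a, b]%classic z by rewrite /= in_itv /= clamp_itv.
have clz : clamp a b t @[t --> x] --> within `[a, b] (nbhs z).
  move=> B zB; have zB' : nbhs z (fun t => `[a, b]%classic t -> B t) := zB.
  have xB : nbhs x (fun t => `[a, b]%classic (clamp a b t) -> B (clamp a b t)).
    exact: continuous_clamp a b x _ zB'.
  change (nbhs x (fun t => B (clamp a b t))); apply: filterS xB => t; apply.
  by rewrite /= in_itv /= clamp_itv.
have fz : f t @[t --> within `[a, b] (nbhs z)] --> f z.
  by rewrite (nbhs_subspace_in z_ab); exact: fc.
exact: cvg_comp clz fz.
Qed.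

Lemma fund_period_eq (T : Type) (G G' : T -> T) x k :
  (forall j, iter j G x = iter j G' x) -> fund_period G x k -> fund_period G' x k.
Proof.
move=> E [k0 [per aper]]; split => //; rewrite -E; split => // j j0 jk.
by rewrite -E; exact: aper.
Qed.

Lemma Per_hyper_eq a b f g : (forall x, a <= x <= b -> a <= f x <= b) ->
  (forall x, a <= x <= b -> f x = g x) -> Per_hyper a b f = Per_hyper a b g.
Proof.
move=> f_ab fg.
have it_ab j x : a <= x <= b -> a <= iter j f x <= b by elim: j => //= j IH /IH /f_ab.
have it_fg j x : a <= x <= b -> iter j f x = iter j g x.
  by move=> x_ab; elim: j => //= j IH; rewrite -IH fg // it_ab.
have E C j : C `<=` `[a, b] -> iter j (induced_map f) C = iter j (induced_map g) C.
  move=> Cab; rewrite !iter_induced_map; apply: eq_imagel => x /Cab.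
  by rewrite /= in_itv /= => /it_fg.
apply/seteqP; split => k [C [hC Ck]]; exists C; split => //;
  by apply: fund_period_eq Ck => j; rewrite E //; case: hC.
Qed.

Lemma Per_hyper1 a b F : continuous F -> (forall x, a <= F x <= b) ->
  Per_hyper a b F 1%N.
Proof.
move=> Fc F_ab; have [p /andP[ap pb] Fp] := exists_fixed_point Fc F_ab.
exists [set p]; split.
  split; first by move=> x ->; rewrite /= in_itv /= ap pb.
  by split; [exists p | exact: closed_eq].
by split => //; split => [|[|j] //]; rewrite /= /induced_map image_set1 Fp.
Qed.

Lemma Per_hyper_biasymptotic a b F k : continuous F -> (forall x, a <= F x <= b) ->
  (exists y, biasymptotic F y) -> (0 < k)%N -> Per_hyper a b F k.
Proof.
move=> Fc F_ab [y [aper [n [xb [n0 xb0 xbS xbc fwd]]]]] k0.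
have [C [hC FkC Fj]] := two_sided_orbit_period k Fc F_ab n0 aper xb0 xbS xbc fwd.
exists C; split => //; split => //; rewrite iter_induced_map; split => // j j0 jk.
by rewrite iter_induced_map; exact: Fj.
Qed.

Lemma Per_hyper_sub12 a b F : continuous F -> (forall x, a <= F x <= b) ->
  (forall n, is_interval (fixset (iter n F))) ->
  Per_hyper a b F `<=` [set 1%N; 2%N].
Proof.
move=> Fc F_ab fix_itv k [C [[Cab [C0 Ccl]] [k0 [FkC Fj]]]].
rewrite iter_induced_map in FkC.
have F2C := invariant_closed_iter2 Fc F_ab fix_itv Ccl C0 Cab k0 FkC.
case: k k0 Fj {FkC} => [|[|[|k]]] // _ Fj; [by left | by right |].
by case: (Fj 2%N); rewrite // iter_induced_map.
Qed.

End hyperspace_periods.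

Lemma set1_or_set12 (P : set nat) :
  P 1%N -> P `<=` [set 1%N; 2%N] -> P = [set 1%N] \/ P = [set 1%N; 2%N].
Proof.
move=> P1 P12; have [P2|P2] := pselect (P 2%N).
  by right; apply/seteqP; split => // k [] ->.
left; apply/seteqP; split => [k /[dup] Pk /P12 [] // k2|k -> //].
by rewrite k2 in Pk.
Qed.

Theorem theorem3p2 (R : realType) (a b : R) (f : R -> R) :
  a < b ->
  (forall x, a <= x <= b -> a <= f x <= b) ->
  {within `[a, b], continuous f} ->
  Per_hyper a b f = [set 1%N] \/
  Per_hyper a b f = [set 1%N; 2%N] \/
  Per_hyper a b f = [set k : nat | (0 < k)%N].
Proof.
move=> /ltW ab f_ab fc; set F := f \o clamp a b.
have Fc : continuous F := continuous_clamp_comp ab fc.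
have F_ab x : a <= F x <= b by apply/f_ab/clamp_itv.
rewrite (@Per_hyper_eq _ _ _ _ F f_ab); last by move=> x /clamp_id; rewrite /F /= => ->.
have [bi|nobi] := pselect (exists y, biasymptotic F y).
  right; right; apply/seteqP; split => [k [C [_ []]] //|k].
  exact: Per_hyper_biasymptotic.
have := Per_hyper_sub12 Fc F_ab (is_interval_fixset_iter Fc F_ab nobi).
by case/(set1_or_set12 (Per_hyper1 Fc F_ab)) => ->; [left | right; left].
Qed.
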